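(* For any $L,L'\in\mathcal{L}$ and any $\gamma$-point, the 1-form $\operatorname{tr}(L\,dL')$ has at most a simple pole at $\gamma$, and $\operatorname{res}_\gamma\operatorname{tr}(L\,dL')=2(\kappa_1+\kappa_2)([L,L'])$.
   Context: $\mathfrak{g}=G_2$ is realized as $7\times7$ matrices $\begin{pmatrix} 0 & -\sqrt{2}a_2^t & -\sqrt{2}a_1^t \\ \sqrt{2}a_1 & A & [a_2] \\ \sqrt{2}a_2 & [a_1] & -A^t \end{pmatrix}$ ($a_i\in\mathbb{C}^3$, $A$ traceless $3\times3$, $[x]$ the skew-symmetric matrix with $[x]y=x\times y$). $\mathcal{L}$ is the Lie algebra (pointwise commutator) of $\mathfrak{g}$-valued meromorphic functions on a Riemann surface with marked points $P_i,Q_j,\gamma_s$, holomorphic outside them, such that at each $\gamma$ (with fixed $\alpha_1,\alpha_2\in\mathbb{C}^3$, $\alpha_1^t\alpha_2=0$, and local coordinate $z$) $L=L_{-2}z^{-2}+L_{-1}z^{-1}+L_0+L_1z+\ldots$ with $L_{-2}=\mu\,\mathrm{diag}(0,\alpha_1\alpha_2^t,-\alpha_2\alpha_1^t)$; $L_{-1}=\begin{pmatrix} 0 & -\sqrt{2}\beta_{02}\alpha_2^t & -\sqrt{2}\beta_{01}\alpha_1^t \\ \sqrt{2}\beta_{01}\alpha_1 & \alpha_1\beta_2^t-\beta_1\alpha_2^t & \beta_{02}[\alpha_2] \\ \sqrt{2}\beta_{02}\alpha_2 & \beta_{01}[\alpha_1] & \alpha_2\beta_1^t-\beta_2\alpha_1^t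 \end{pmatrix}$ with $\alpha_1^t\beta_2=\alpha_2^t\beta_1=0$; $L_0$ with entries $a_1,a_2,A$ satisfying $\alpha_1^ta_2=\alpha_2^ta_1=0$, $A\alpha_1=\kappa_1\alpha_1$, $-A^t\alpha_2=\kappa_2\alpha_2$; and the $(2,2)$ block $B$ of $L_1$ satisfying $\alpha_2^tB\alpha_1=0$. For $L\in\mathcal{L}$, $\kappa_1(L),\kappa_2(L)$ denote these eigenvalues $\kappa_1,\kappa_2$ of $L_0$ at $\gamma$, and $(\kappa_1+\kappa_2)(L)=\kappa_1(L)+\kappa_2(L)$. *)

From mathcomp Require Import all_boot all_order all_algebra.
Set Implicit Arguments. Unset Strict Implicit. Unset Printing Implicit Defensive.
Import Order.TTheory GRing.Theory Num.Theory.
Local Open Scope ring_scope.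

Section G2Defs.
Variable R : numClosedFieldType.

Definition sq2 : R := sqrtC 2.

Definition i0 : 'I_3 := @Ordinal 3 0 isT.
Definition i1 : 'I_3 := @Ordinal 3 1 isT.
Definition i2 : 'I_3 := @Ordinal 3 2 isT.

Definition skew (x : 'cV[R]_3) : 'M[R]_3 :=
  let x1 := x i0 0 in let x2 := x i1 0 in let x3 := x i2 0 in
  \matrix_(i < 3, j < 3)
    nth 0 (nth [::] [:: [:: 0; - x3; x2]; [:: x3; 0; - x1]; [:: - x2; x1; 0]] i) j.

Definition M7 := 'M[R]_(1 + (3 + 3)).

Definition G2mat (a1 a2 : 'cV[R]_3) (A : 'M[R]_3) : M7 :=
  block_mx (0 : 'M_1) (row_mx (- sq2 *: a2^T) (- sq2 *: a1^T))
           (col_mx (sq2 *: a1) (sq2 *: a2))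
           (block_mx A (skew a2) (skew a1) (- A^T)).

Definition inG2 (M : M7) : Prop :=
  exists a1 a2 A, \tr A = 0 /\ M = G2mat a1 a2 A.

Definition blk22 (M : M7) : 'M[R]_3 := ulsubmx (drsubmx M).

(* A local Laurent expansion at gamma is encoded by c : nat -> M7,
   with c n the coefficient of z^(n-2)  (so c 0 = L_{-2}, c 1 = L_{-1},
   c 2 = L_0, c 3 = L_1, ...). *)
Definition in_L_at_gamma (alpha1 alpha2 : 'cV[R]_3) (c : nat -> M7) : Prop :=
  (forall n, inG2 (c n)) /\
  (exists mu : R,
     c 0%N = mu *: block_mx (0 : 'M_1) 0 0
               (block_mx (alpha1 *m alpha2^T) 0 0 (- (alpha2 *m alpha1^T)))) /\
  (exists (b01 b02 : R) (b1 b2 : 'cV[R]_3),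
     alpha1^T *m b2 = 0 /\ alpha2^T *m b1 = 0 /\
     c 1%N = G2mat (b01 *: alpha1) (b02 *: alpha2)
                   (alpha1 *m b2^T - b1 *m alpha2^T)) /\
  (exists (a1 a2 : 'cV[R]_3) (A : 'M[R]_3) (k1 k2 : R),
     alpha1^T *m a2 = 0 /\ alpha2^T *m a1 = 0 /\
     A *m alpha1 = k1 *: alpha1 /\ - A^T *m alpha2 = k2 *: alpha2 /\
     c 2%N = G2mat a1 a2 A) /\
  alpha2^T *m blk22 (c 3%N) *m alpha1 = 0.

(* coefficient of z^(k-5) in tr(L dL'/dz) :  sum_{i+j=k} (j-2) tr(L_{i-2} L'_{j-2}) *)
Definition trdcoef (c c' : nat -> M7) (k : nat) : R :=
  \sum_(i < k.+1) (((k - i)%N)%:R - 2) * \tr (c i *m c' (k - i)%N).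

(* coefficient of z^(k-4) of the pointwise commutator [L, L'] *)
Definition commcoef (c c' : nat -> M7) (k : nat) : M7 :=
  \sum_(i < k.+1) (c i *m c' (k - i)%N - c' (k - i)%N *m c i).

End G2Defs.

(* Write L = sum_(n >= -2) L_n z^n.  The coefficients L_(-2), ..., L_1 are
   "flagged": their (2,2) block B satisfies alpha2^T B alpha1 = 0, and L_(-2),
   L_(-1), L_0 moreover have the explicit shapes imposed at gamma.  The
   coefficient of z^(k-1) in tr(L dL') is sum_(n+m=k) m tr(L_n L'_m); for k < 0
   every such trace vanishes by the shape conditions.  For k = 0 the pair (n, m)
   contributes (m - n)/2 tr(L_n L'_m), and a direct computation shows that the
   (2,2) block of [L_n, L'_m] has alpha1 as an eigenvector, minus its transpose
   has alpha2 as an eigenvector, and the two eigenvalues add up to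
   (m - n)/4 tr(L_n L'_m). *)

From Pilot Require Import Defs.
From mathcomp Require Import all_boot all_order all_algebra.
From mathcomp Require Import ring.
Import GRing.Theory Num.Theory.
Local Open Scope ring_scope.

Lemma sum_ord3 (V : nmodType) (F : 'I_3 -> V) : \sum_i F i = F i0 + F i1 + F i2.
Proof.
rewrite !big_ord_recl big_ord0 addr0 addrA.
by congr (F _ + F _ + F _); apply: val_inj.
Qed.

Lemma ord3P (P : 'I_3 -> Prop) : P i0 -> P i1 -> P i2 -> forall i, P i.
Proof.
move=> P0 P1 P2 [[|[|[|k]]] lt_k3] //.
- by rewrite (_ : Ordinal _ = i0) //; apply: val_inj.
- by rewrite (_ : Ordinal _ = i1) //; apply: val_inj.
- by rewrite (_ : Ordinal _ = i2) //; apply: val_inj.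
Qed.

Definition dot {R : pzRingType} (u v : 'cV[R]_3) : R := (u^T *m v) 0 0.

(* Plain [skew] would denote MathComp's skew-symmetry flag of sesquilinear forms. *)
Ltac coords :=
  rewrite /dot ?/Defs.skew;
  repeat first [rewrite !mxE | rewrite !sum_ord3 | rewrite !big_ord1];
  rewrite /=.

Ltac mx3_coords :=
  let i := fresh "i" in let j := fresh "j" in
  apply/matrixP => i j; elim/ord3P: i; elim/ord3P: j; coords.

Ltac cV3_coords :=
  let i := fresh "i" in let j := fresh "j" in
  apply/matrixP => i j; rewrite [j]ord1; elim/ord3P: i; coords.

Section Dot.
Context {R : comPzRingType}.
Implicit Types u v w : 'cV[R]_3.

Lemma dotC u v : dot u v = dot v u.
Proof. by coords; ring. Qed.

Lemma dotZr a u v : dot u (a *: v) = a * dot u v.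
Proof. by rewrite /dot -scalemxAr mxE. Qed.

Lemma dotZl a u v : dot (a *: u) v = a * dot u v.
Proof. by rewrite dotC dotZr dotC. Qed.

Lemma dot0l u : dot 0 u = 0.
Proof. by rewrite /dot trmx0 mul0mx mxE. Qed.

Lemma dot0r u : dot u 0 = 0.
Proof. by rewrite /dot mulmx0 mxE. Qed.

Lemma dot_trmx (B : 'M[R]_3) u v : dot u (B^T *m v) = dot v (B *m u).
Proof. by coords; ring. Qed.

Lemma outer_mulmx u v w : u *m v^T *m w = dot v w *: u.
Proof. by rewrite -mulmxA [v^T *m w]mx11_scalar mul_mx_scalar. Qed.

Lemma mxtrace_outer_mul (B : 'M[R]_3) u v : \tr (u *m v^T *m B) = dot v (B *m u).
Proof. by rewrite -mulmxA mxtrace_mulC -mulmxA /mxtrace big_ord1. Qed.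

End Dot.

Section G2Blocks.
Context {R : numClosedFieldType}.
Implicit Types (v w : 'cV[R]_3) (A B : 'M[R]_3) (X Y : M7 R).

Lemma sq2_mul : sq2 R * sq2 R = 2.
Proof. by rewrite /sq2 -expr2 sqrtCK. Qed.

Lemma mxtrace_G2mat_mul (x1 x2 y1 y2 : 'cV[R]_3) A B :
  \tr (G2mat x1 x2 A *m G2mat y1 y2 B) = -6 * (dot x1 y2 + dot x2 y1) + 2 * \tr (A *m B).
Proof.
rewrite /G2mat mulmx_block mul_row_col mul_col_row mulmx_block add_block_mx.
rewrite !mxtrace_block -!scalemxAl -!scalemxAr !scalerA !mulNr sq2_mul.
rewrite /mxtrace; coords; rewrite !mulrN sq2_mul; ring.
Qed.

Lemma blk22_G2mat (x1 x2 : 'cV[R]_3) A : blk22 (G2mat x1 x2 A) = A.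
Proof. by rewrite /blk22 /G2mat block_mxKdr block_mxKul. Qed.

Lemma blk22_G2mat_mul (x1 x2 y1 y2 : 'cV[R]_3) A B :
  blk22 (G2mat x1 x2 A *m G2mat y1 y2 B) =
  A *m B - 2 *: (x1 *m y2^T) + Defs.skew x2 *m Defs.skew y1.
Proof.
rewrite /blk22 /G2mat mulmx_block mul_col_row mulmx_block add_block_mx.
rewrite block_mxKdr block_mxKul -scalemxAl -scalemxAr scalerA mulrN sq2_mul.
by rewrite scaleNr addrCA addrA.
Qed.

Lemma skew0 : Defs.skew (0 : 'cV[R]_3) = 0.
Proof. by mx3_coords; ring. Qed.

Lemma blk22_0 : blk22 (0 : M7 R) = 0.
Proof. by apply/matrixP => i j; rewrite /blk22 !mxE. Qed.

Lemma blk22D X Y : blk22 (X + Y) = blk22 X + blk22 Y.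
Proof. by apply/matrixP => i j; rewrite /blk22 !mxE. Qed.

Lemma blk22B X Y : blk22 (X - Y) = blk22 X - blk22 Y.
Proof. by apply/matrixP => i j; rewrite /blk22 !mxE. Qed.

Definition lie22 X Y := blk22 (X *m Y - Y *m X).

Lemma lie22C X Y : lie22 Y X = - lie22 X Y.
Proof. by rewrite /lie22 !blk22B opprB. Qed.

Lemma lie22_G2mat_mulmx (x1 x2 y1 y2 : 'cV[R]_3) A B v :
  lie22 (G2mat x1 x2 A) (G2mat y1 y2 B) *m v =
  A *m (B *m v) - B *m (A *m v) + (3 * dot x2 v) *: y1 - (3 * dot y2 v) *: x1
  + (dot x1 y2 - dot x2 y1) *: v.
Proof. by rewrite /lie22 blk22B !blk22_G2mat_mul; cV3_coords; ring. Qed.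

Lemma lie22_G2mat_trmx_mulmx (x1 x2 y1 y2 : 'cV[R]_3) A B w :
  - (lie22 (G2mat x1 x2 A) (G2mat y1 y2 B))^T *m w =
  A^T *m (B^T *m w) - B^T *m (A^T *m w) + (3 * dot x1 w) *: y2 - (3 * dot y1 w) *: x2
  + (dot x2 y1 - dot x1 y2) *: w.
Proof. by rewrite /lie22 blk22B !blk22_G2mat_mul; cV3_coords; ring. Qed.

Lemma trdcoefE (c c' : nat -> M7 R) k :
  trdcoef c c' k = \sum_(0 <= i < k.+1) ((k - i)%:R - 2) * \tr (c i *m c' (k - i)%N).
Proof. by rewrite big_mkord. Qed.

Lemma blk22_commcoef (c c' : nat -> M7 R) k :
  blk22 (commcoef c c' k) = \sum_(0 <= i < k.+1) lie22 (c i) (c' (k - i)%N).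
Proof. by rewrite /commcoef (big_morph _ blk22D blk22_0) big_mkord. Qed.

End G2Blocks.

Lemma dot_eq0 {R : pzRingType} {u v : 'cV[R]_3} : u^T *m v = 0 -> dot u v = 0.
Proof. by rewrite /dot => ->; rewrite mxE. Qed.

Section AtGamma.
Context {R : numClosedFieldType} {alpha1 alpha2 : 'cV[R]_3}.
Hypothesis alpha12 : dot alpha1 alpha2 = 0.
Implicit Types (X Y : M7 R) (M : 'M[R]_3).

Let alpha21 : dot alpha2 alpha1 = 0.
Proof. by rewrite dotC. Qed.

Definition Lm2 (mu : R) : M7 R := G2mat 0 0 (mu *: (alpha1 *m alpha2^T)).

Definition Lm1 (b01 b02 : R) (b1 b2 : 'cV[R]_3) : M7 R :=
  G2mat (b01 *: alpha1) (b02 *: alpha2) (alpha1 *m b2^T - b1 *m alpha2^T).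

Definition is_Lm2 X := exists mu, X = Lm2 mu.

Definition is_Lm1 X := exists b01 b02 b1 b2,
  [/\ dot alpha1 b2 = 0, dot alpha2 b1 = 0 & X = Lm1 b01 b02 b1 b2].

Definition is_L0 X := exists a1 a2 A k1 k2,
  [/\ dot alpha1 a2 = 0, dot alpha2 a1 = 0, A *m alpha1 = k1 *: alpha1,
      - A^T *m alpha2 = k2 *: alpha2 & X = G2mat a1 a2 A].

Definition flagged X :=
  exists y1 y2 B, X = G2mat y1 y2 B /\ dot alpha2 (B *m alpha1) = 0.

Definition twice_kappa_sum M r := exists k1 k2,
  M *m alpha1 = k1 *: alpha1 /\ - M^T *m alpha2 = k2 *: alpha2 /\ r = 2 * (k1 + k2).

Lemma twice_kappa_sumD {M N r s} :
  twice_kappa_sum M r -> twice_kappa_sum N s -> twice_kappa_sum (M + N) (r + s).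
Proof.
move=> [k1 [k2 [M1 [M2 ->]]]] [l1 [l2 [N1 [N2 ->]]]].
exists (k1 + l1), (k2 + l2).
rewrite mulmxDl M1 N1 linearD /= opprD mulmxDl M2 N2 !scalerDl.
by do !split=> //; ring.
Qed.

Lemma twice_kappa_sumN {M r} : twice_kappa_sum M r -> twice_kappa_sum (- M) (- r).
Proof.
move=> [k1 [k2 [M1 [M2 ->]]]]; exists (- k1), (- k2).
by rewrite mulNmx M1 linearN /= mulNmx M2 !scaleNr; do !split=> //; ring.
Qed.

Lemma Lm1_block_mulmx (b1 b2 v : 'cV[R]_3) :
  (alpha1 *m b2^T - b1 *m alpha2^T) *m v = dot b2 v *: alpha1 - dot alpha2 v *: b1.
Proof. by rewrite mulmxBl !outer_mulmx. Qed.

Lemma Lm1_block_trmx_mulmx (b1 b2 w : 'cV[R]_3) :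
  (alpha1 *m b2^T - b1 *m alpha2^T)^T *m w = dot alpha1 w *: b2 - dot b1 w *: alpha2.
Proof. by rewrite linearB /= !trmx_mul !trmxK mulmxBl !outer_mulmx. Qed.

Lemma is_Lm2_flagged {X} : is_Lm2 X -> flagged X.
Proof.
move=> [mu ->]; exists 0, 0, (mu *: (alpha1 *m alpha2^T)); split=> //.
by rewrite -scalemxAl outer_mulmx alpha21 scale0r scaler0 dot0r.
Qed.

Lemma is_Lm1_flagged {X} : is_Lm1 X -> flagged X.
Proof.
move=> [b01 [b02 [b1 [b2 [hb2 _ ->]]]]]; eexists _, _, _; split; first by [].
by rewrite Lm1_block_mulmx (dotC b2 alpha1) hb2 alpha21 !scale0r subrr dot0r.
Qed.

Lemma is_L0_flagged {X} : is_L0 X -> flagged X.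
Proof.
move=> [a1 [a2 [A [k1 [k2 [_ _ hA _ ->]]]]]]; exists a1, a2, A; split=> //.
by rewrite hA dotZr alpha21 mulr0.
Qed.

Lemma mxtrace_Lm2_mul mu (y1 y2 : 'cV[R]_3) B :
  \tr (Lm2 mu *m G2mat y1 y2 B) = 2 * mu * dot alpha2 (B *m alpha1).
Proof.
by rewrite mxtrace_G2mat_mul !dot0l -scalemxAl mxtraceZ mxtrace_outer_mul; ring.
Qed.

Lemma mxtrace_Lm2_flagged {X Y} : is_Lm2 X -> flagged Y -> \tr (X *m Y) = 0.
Proof. by move=> [mu ->] [y1 [y2 [B [-> hB]]]]; rewrite mxtrace_Lm2_mul hB mulr0. Qed.

Lemma mxtrace_Lm1_mul b01 b02 (b1 b2 p1 p2 : 'cV[R]_3) P :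
  \tr (Lm1 b01 b02 b1 b2 *m G2mat p1 p2 P) =
  -6 * (b01 * dot alpha1 p2 + b02 * dot alpha2 p1)
  + 2 * (dot b2 (P *m alpha1) - dot b1 (P^T *m alpha2)).
Proof.
rewrite mxtrace_G2mat_mul !dotZl mulmxBl linearB /= !mxtrace_outer_mul dot_trmx.
by ring.
Qed.

Lemma mxtrace_Lm1_Lm1 {X Y} : is_Lm1 X -> is_Lm1 Y -> \tr (X *m Y) = 0.
Proof.
move=> [b01 [b02 [b1 [b2 [_ _ ->]]]]] [b01' [b02' [b1' [b2' [hb2' hb1' ->]]]]].
rewrite {2}/Lm1 mxtrace_Lm1_mul Lm1_block_mulmx Lm1_block_trmx_mulmx.
rewrite !dotZr (dotC b2' alpha1) (dotC b1' alpha2) hb2' hb1' alpha12 alpha21.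
rewrite !scale0r subrr !dot0r.
by ring.
Qed.

Lemma mxtrace_Lm1_L0 {X Y} : is_Lm1 X -> is_L0 Y -> \tr (X *m Y) = 0.
Proof.
move=> [b01 [b02 [b1 [b2 [hb2 hb1 ->]]]]] [a1 [a2 [A [k1 [k2 [ha2 ha1 hA1 hA2 ->]]]]]].
have hAT : A^T *m alpha2 = - k2 *: alpha2 by rewrite scaleNr -hA2 mulNmx opprK.
rewrite mxtrace_Lm1_mul hA1 hAT !dotZr (dotC b2 alpha1) (dotC b1 alpha2).
rewrite hb2 hb1 ha2 ha1.
by ring.
Qed.

Lemma twice_kappa_sum_Lm2 {X Y} : is_Lm2 X -> inG2 Y ->
  twice_kappa_sum (lie22 X Y) (2 * \tr (X *m Y)).
Proof.
move=> [mu ->] [q1 [q2 [Q [_ ->]]]].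
exists (mu * dot alpha2 (Q *m alpha1)), (mu * dot alpha2 (Q *m alpha1)).
rewrite lie22_G2mat_mulmx lie22_G2mat_trmx_mulmx mxtrace_Lm2_mul.
rewrite [(_ *: _)^T]linearZ /= trmx_mul trmxK.
rewrite -!scalemxAl -!scalemxAr !outer_mulmx dot_trmx.
rewrite alpha12 alpha21 !dot0l !scalerA.
rewrite ?(mulr0, scale0r, scaler0, mulmx0, subrr, subr0, addr0).
by do !split=> //; ring.
Qed.

Lemma twice_kappa_sum_Lm1 {X Y} : is_Lm1 X -> flagged Y ->
  twice_kappa_sum (lie22 X Y) (\tr (X *m Y)).
Proof.
move=> [b01 [b02 [b1 [b2 [hb2 hb1 ->]]]]] [p1 [p2 [P [-> hP]]]].
exists (dot b2 (P *m alpha1) - 2 * b01 * dot alpha1 p2 - b02 * dot alpha2 p1).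
exists (- dot b1 (P^T *m alpha2) - 2 * b02 * dot alpha2 p1 - b01 * dot alpha1 p2).
rewrite mxtrace_Lm1_mul /Lm1 lie22_G2mat_mulmx lie22_G2mat_trmx_mulmx.
rewrite !Lm1_block_mulmx !Lm1_block_trmx_mulmx !dotZl.
rewrite (dotC b2 alpha1) (dotC b1 alpha2) (dotC p2 alpha1) (dotC p1 alpha2).
rewrite (dot_trmx P alpha1) hP hb2 hb1 alpha12 alpha21.
rewrite ?(mulr0, scale0r, scaler0, mulmx0, oppr0, subrr, subr0, addr0, sub0r).
rewrite !scalerA -!scaleNr -!scalerDl.
by do !split; first [congr (_ *: _) | idtac]; ring.
Qed.

Lemma twice_kappa_sum_L0 {X Y} : is_L0 X -> is_L0 Y -> twice_kappa_sum (lie22 X Y) 0.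
Proof.
move=> [a1 [a2 [A [k1 [k2 [ha2 ha1 hA1 hA2 ->]]]]]].
move=> [a1' [a2' [A' [k1' [k2' [ha2' ha1' hA1' hA2' ->]]]]]].
have hAT : A^T *m alpha2 = - k2 *: alpha2 by rewrite scaleNr -hA2 mulNmx opprK.
have hAT' : A'^T *m alpha2 = - k2' *: alpha2 by rewrite scaleNr -hA2' mulNmx opprK.
exists (dot a1 a2' - dot a2 a1'), (dot a2 a1' - dot a1 a2').
rewrite lie22_G2mat_mulmx lie22_G2mat_trmx_mulmx hA1 hA1' hAT hAT'.
rewrite -!scalemxAr hA1 hA1' hAT hAT'.
rewrite (dotC a2 alpha1) (dotC a2' alpha1) (dotC a1 alpha2) (dotC a1' alpha2).
rewrite ha2 ha2' ha1 ha1'.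
rewrite ?(mulr0, scale0r, scaler0, mulmx0, oppr0, subrr, subr0, addr0, sub0r).
rewrite !scalerA -!scaleNr -!scalerDl.
by do !split; first [congr (_ *: _) | idtac]; ring.
Qed.

Lemma Lm2E mu :
  mu *: block_mx (0 : 'M_1) 0 0 (block_mx (alpha1 *m alpha2^T) 0 0 (- (alpha2 *m alpha1^T)))
  = Lm2 mu.
Proof.
rewrite /Lm2 /G2mat skew0 !trmx0 !scaler0 row_mx0 col_mx0 !scale_block_mx !scaler0.
by rewrite [(_ *: _)^T]linearZ /= trmx_mul trmxK scalerN.
Qed.

Lemma in_L_at_gamma_coefs c : in_L_at_gamma alpha1 alpha2 c ->
  [/\ is_Lm2 (c 0%N), is_Lm1 (c 1%N), is_L0 (c 2%N), flagged (c 3%N) & inG2 (c 4%N)].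
Proof.
move=> [inG2c [[mu c0E] [[b01 [b02 [b1 [b2 [hb2 [hb1 c1E]]]]]] [L0_data c3_flag]]]].
move: L0_data => [a1 [a2 [A [k1 [k2 [ha2 [ha1 [hA1 [hA2 c2E]]]]]]]]].
split; last exact: inG2c.
- by exists mu; rewrite c0E Lm2E.
- by exists b01, b02, b1, b2; split; rewrite ?dot_eq0.
- by exists a1, a2, A, k1, k2; split; rewrite ?dot_eq0.
- have [p1 [p2 [P [_ c3E]]]] := inG2c 3%N.
  rewrite c3E blk22_G2mat in c3_flag.
  by exists p1, p2, P; split; rewrite // /dot mulmxA c3_flag mxE.
Qed.

Lemma trdcoef_pole_eq0 {c c'} :
  in_L_at_gamma alpha1 alpha2 c -> in_L_at_gamma alpha1 alpha2 c' ->
  forall k, (k < 4)%N -> trdcoef c c' k = 0.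
Proof.
move=> /in_L_at_gamma_coefs[c0 c1 c2 c3 _] /in_L_at_gamma_coefs[c0' c1' c2' c3' _].
have tr_c0 X : flagged X -> \tr (c 0%N *m X) = 0 := mxtrace_Lm2_flagged c0.
have tr_c'0 X : flagged X -> \tr (X *m c' 0%N) = 0.
  by rewrite mxtrace_mulC; apply: mxtrace_Lm2_flagged.
case=> [|[|[|[|//]]]] _; rewrite trdcoefE !big_nat_recl // big_geq // ?subSS ?subn0.
- by rewrite (tr_c0 _ (is_Lm2_flagged c0')); ring.
- by rewrite (tr_c0 _ (is_Lm1_flagged c1')) (tr_c'0 _ (is_Lm1_flagged c1)); ring.
- rewrite (tr_c0 _ (is_L0_flagged c2')) (tr_c'0 _ (is_L0_flagged c2)).
  by rewrite (mxtrace_Lm1_Lm1 c1 c1'); ring.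
- rewrite (tr_c0 _ c3') (tr_c'0 _ c3).
  by rewrite (mxtrace_mulC (c 2%N)) (mxtrace_Lm1_L0 c1' c2); ring.
Qed.

Lemma trdcoef_residue {c c'} :
  in_L_at_gamma alpha1 alpha2 c -> in_L_at_gamma alpha1 alpha2 c' ->
  twice_kappa_sum (blk22 (commcoef c c' 4)) (trdcoef c c' 4).
Proof.
move=> /in_L_at_gamma_coefs[c0 c1 c2 c3 c4] /in_L_at_gamma_coefs[c0' c1' c2' c3' c4'].
have -> : trdcoef c c' 4 = 2 * \tr (c 0%N *m c' 4%N) + \tr (c 1%N *m c' 3%N) + 0
    + - \tr (c' 1%N *m c 3%N) + - (2 * \tr (c' 0%N *m c 4%N)).
  rewrite trdcoefE !big_nat_recl // big_geq // ?subSS ?subn0.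
  by rewrite (mxtrace_mulC (c' 1%N)) (mxtrace_mulC (c' 0%N)); ring.
rewrite blk22_commcoef !big_nat_recl // big_geq // ?subSS ?subn0 addr0 !addrA.
rewrite (lie22C (c' 1%N)) (lie22C (c' 0%N)).
apply: twice_kappa_sumD (twice_kappa_sumN (twice_kappa_sum_Lm2 c0' c4)).
apply: twice_kappa_sumD (twice_kappa_sumN (twice_kappa_sum_Lm1 c1' c3)).
apply: twice_kappa_sumD (twice_kappa_sum_L0 c2 c2').
exact: twice_kappa_sumD (twice_kappa_sum_Lm2 c0 c4') (twice_kappa_sum_Lm1 c1 c3').
Qed.

End AtGamma.

Theorem lemma5p2 (R : numClosedFieldType) (alpha1 alpha2 : 'cV[R]_3)
  (Ha1 : alpha1 != 0) (Ha2 : alpha2 != 0)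
  (Horth : alpha1^T *m alpha2 = 0)
  (c c' : nat -> M7 R)
  (Hc : in_L_at_gamma alpha1 alpha2 c) (Hc' : in_L_at_gamma alpha1 alpha2 c') :
  (* at most a simple pole: coefficients of z^-5, ..., z^-2 vanish *)
  (forall k : nat, (k < 4)%N -> trdcoef c c' k = 0) /\
  (* residue = 2 (kappa1 + kappa2)([L, L']) *)
  (exists k1 k2 : R,
     blk22 (commcoef c c' 4) *m alpha1 = k1 *: alpha1 /\
     - (blk22 (commcoef c c' 4))^T *m alpha2 = k2 *: alpha2 /\
     trdcoef c c' 4 = 2 * (k1 + k2)).
Proof.
have alpha12 := dot_eq0 Horth.
split; first exact: (trdcoef_pole_eq0 alpha12 Hc Hc').
exact: (trdcoef_residue alpha12 Hc Hc').
Qed.
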